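(* Let $m\ge 1$ and $r\ge 0$ be integers, let $n$ be a positive integer and let $x$ be a real number. Then \[ {\sum}^{2r}(x+n)^{2m}=\sum_{k=1}^m T(2m,2k)\left\{\frac{(x+n+r)(x+n+k+2r-1)_{2k+2r-1}}{(2k+2r)_{2r}}-\sum_{i=1}^{2r}\binom{n+2r-i-1}{2r-i}\frac{(2x+i)(x+k+i-1)_{2k+i-1}}{2(2k+i)_i}\right\}. \]
   Context: $(y)_k=y(y-1)\cdots(y-k+1)$ is the lower factorial ($(y)_0=1$). The $r$-fold sum is defined by ${\sum}^0 f(n)=f(n)$ and ${\sum}^r f(n)={\sum}^{r-1}f(1)+{\sum}^{r-1}f(2)+\cdots+{\sum}^{r-1}f(n)$; equivalently ${\sum}^r f(n)=\sum_{1\le i_1\le\cdots\le i_r\le n} f(i_1)$, here with $f(n)=(x+n)^{2m}$. The central factorials are $y^{[k]}=y\,(y+k/2-1)_{k-1}$ for $k\ge1$, and the central factorial numbers $T(m,k)$ are the coefficients determined by $y^m=\sum_{k=1}^m T(m,k)\,y^{[k]}$ for all $y$ and $m\ge 1$. *)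

From HB Require Import structures.
From mathcomp Require Import all_boot all_order all_algebra.
Set Implicit Arguments. Unset Strict Implicit. Unset Printing Implicit Defensive.
Import Order.TTheory GRing.Theory Num.Theory.
Local Open Scope ring_scope.

Definition lfact (R : ringType) (y : R) (k : nat) : R :=
  \prod_(i < k) (y - i%:R).

Definition cfact (R : fieldType) (y : R) (k : nat) : R :=
  if k is k'.+1 then y * lfact (y + k%:R / 2%:R - 1) k' else 1.

Fixpoint rsum (R : ringType) (r : nat) (f : nat -> R) (n : nat) : R :=
  match r with
  | 0 => f n
  | r'.+1 => \sum_(1 <= j < n.+1) rsum r' f j
  end.

Definition is_central_factorial_numbers (R : fieldType) (T : nat -> nat -> R) : Prop :=
  forall (m : nat) (y : R), (1 <= m)%N ->
    y ^+ m = \sum_(1 <= k < m.+1) T m k * cfact y k.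

From HB Require Import structures.
From mathcomp Require Import all_boot all_order all_algebra.
From mathcomp Require Import zify ring.
Set Implicit Arguments.
Unset Strict Implicit.
Unset Printing Implicit Defensive.
Import Order.TTheory GRing.Theory Num.Theory.
Local Open Scope ring_scope.

(* Since (-y)^[k] = (-1)^k y^[k], only the even central factorials occur in the
   expansion of y^(2m).  Each y^[2k] has the explicit tower of backward
   antidifferences
     D_i(y) = (2y + i) (y + k + i - 1)_(2k+i-1) / (2 (2k+i)_i),
   with D_0 = y^[2k] and D_(i+1)(y) - D_(i+1)(y - 1) = D_i(y).  For any such
   tower A_i, summing s times telescopes to
     sum^s A_0(x + n) = A_s(x + n) - sum_(i=1..s) C(n+s-i-1, s-i) A_i(x),
   the binomial counting, by the hockey-stick identity, how often the boundary
   term A_i(x) is collected.  For s = 2r, D_(2r)(x + n) is the first term of the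
   formula. *)

Lemma eq_rsum (R : nzRingType) s (f g : nat -> R) : f =1 g -> rsum s f =1 rsum s g.
Proof.
move=> fg; elim: s => [|s IH] n /=; first exact: fg.
by apply: eq_bigr => j _; rewrite IH.
Qed.

Lemma hockey_stick a n :
  (\sum_(1 <= j < n.+1) 'C(j + a - 1, a) = 'C(n + a, a.+1))%N.
Proof.
elim: n => [|n IH]; first by rewrite big_geq // bin_small.
by rewrite big_nat_recr //= IH addSn binS subn1.
Qed.

Section IteratedAntidifferences.

Variables (R : nzRingType) (A : nat -> R -> R).
Hypothesis A_antidiff : forall i y, A i.+1 y - A i.+1 (y - 1) = A i y.

Lemma sum_antidiff s x n :
  \sum_(1 <= j < n.+1) A s (x + j%:R) = A s.+1 (x + n%:R) - A s.+1 x.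
Proof.
rewrite big_add1 /= -[X in _ - A _ X]addr0.
apply: (telescope_sumr_eq (fun j => A s.+1 (x + j%:R))) => // j _.
by rewrite -A_antidiff -natr1 addrA addrK.
Qed.

Lemma rsum_antidiff s x n :
  rsum s (fun j => A 0%N (x + j%:R)) n =
  A s (x + n%:R) - \sum_(1 <= i < s.+1) 'C(n + s - i - 1, s - i)%:R * A i x.
Proof.
elim: s n => [|s IH] n /=; first by rewrite big_geq // subr0.
under eq_bigr do rewrite IH.
rewrite sumrB sum_antidiff exchange_big /=.
rewrite [in RHS]big_nat_recr //= subnn bin0 mul1r opprD addrA [in RHS]addrAC.
congr (_ - _ - _); apply: eq_big_nat => i /andP [i_gt0 i_le_s].
rewrite -mulr_suml -natr_sum.
have -> : (s.+1 - i = (s - i).+1)%N by lia.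
have -> : (n + s.+1 - i - 1 = n + (s - i))%N by lia.
rewrite -hockey_stick; congr (_%:R * _); apply: eq_bigr => j _; congr 'C(_, _); lia.
Qed.

End IteratedAntidifferences.

Lemma lfactS (R : nzRingType) (y : R) k : lfact y k.+1 = y * lfact (y - 1) k.
Proof.
rewrite /lfact big_ord_recl subr0; congr (_ * _); apply: eq_bigr => j _.
by rewrite lift0 -natr1 opprD [- _ - 1]addrC addrA.
Qed.

Lemma lfactSr (R : nzRingType) (y : R) k : lfact y k.+1 = lfact y k * (y - k%:R).
Proof. by rewrite /lfact big_ord_recr. Qed.

Lemma lfact_nat_neq0 (R : numDomainType) N i : (i <= N)%N -> lfact (N%:R : R) i != 0.
Proof.
move=> le_iN; apply/prodf_neq0 => j _.
have lt_jN : (j < N)%N by exact: leq_trans (ltn_ord j) le_iN.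
by rewrite -natrB ?pnatr_eq0 -?lt0n ?subn_gt0 // ltnW.
Qed.

Lemma lfact_opp (R : comNzRingType) (y : R) k :
  lfact (k%:R - 1 - y) k = (-1) ^+ k * lfact y k.
Proof.
case: k => [|k]; first by rewrite /lfact !big_ord0 mulr1.
rewrite -natr1 addrK /lfact (reindex_inj rev_ord_inj).
transitivity (\prod_(j < k.+1) (-1 * (y - j%:R))).
  apply: eq_bigr => j _; rewrite /= subSS natrB ?leq_ord //.
  by rewrite mulN1r !opprB addrC addrA subrK.
by rewrite big_split /= prodr_const card_ord.
Qed.

Lemma cfact_opp (R : numFieldType) (y : R) k :
  cfact (- y) k = (-1) ^+ k * cfact y k.
Proof.
case: k => [|k] /=; first by rewrite mul1r.
have -> : - y + k.+1%:R / 2%:R - 1 = k%:R - 1 - (y + k.+1%:R / 2%:R - 1).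
  by rewrite -natr1; field.
by rewrite lfact_opp exprS; ring.
Qed.

Lemma sum_nat_even (V : nmodType) (F : nat -> V) m :
  \sum_(1 <= k < (2 * m).+1 | ~~ odd k) F k = \sum_(1 <= k < m.+1) F (2 * k)%N.
Proof.
elim: m => [|m IH]; first by rewrite !big_geq.
rewrite big_mkcond /= mulnS add2n big_nat_recr // big_nat_recr //= -big_mkcond.
by rewrite oddM /= addr0 IH [in RHS]big_nat_recr //= mulnS add2n.
Qed.

Lemma even_expr_cfact (R : numFieldType) (T : nat -> nat -> R) m (y : R) :
  is_central_factorial_numbers T -> (1 <= m)%N ->
  y ^+ (2 * m) = \sum_(1 <= k < m.+1) T (2 * m)%N (2 * k)%N * cfact y (2 * k).
Proof.
move=> hT m_gt0; have m2_gt0 : (1 <= 2 * m)%N by rewrite muln_gt0.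
rewrite -(sum_nat_even (fun k => T (2 * m)%N k * cfact y k)).
have E := hT _ y m2_gt0; have E' := hT _ (- y) m2_gt0.
rewrite (bigID odd) /= in E; rewrite exprM sqrrN -exprM (bigID odd) /= in E'.
set so := \sum_(1 <= i < _ | odd i) _ in E; set se := \sum_(1 <= i < _ | ~~ odd i) _ in E.
have {}E' : y ^+ (2 * m) = - so + se.
  rewrite E' /so -sumrN; congr (_ + _); apply: eq_bigr => k.
    by move=> k_odd; rewrite cfact_opp -signr_odd k_odd mulN1r mulrN.
  by move=> /negbTE k_even; rewrite cfact_opp -signr_odd k_even mul1r.
have : so = - so by apply: (addIr se); rewrite -E -E'.
move/eqP; rewrite -subr_eq0 opprK -mulr2n mulrn_eq0 /= => /eqP so0.
by rewrite E so0 add0r.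
Qed.

Definition even_cfact_antidiff {R : numFieldType} (k i : nat) (y : R) : R :=
  (2%:R * y + i%:R) * lfact (y + k%:R + i%:R - 1) (2 * k + i - 1)
    / (2%:R * lfact (2 * k + i)%:R i).

Lemma even_cfact_antidiff0 (R : numFieldType) k (y : R) : (1 <= k)%N ->
  even_cfact_antidiff k 0 y = cfact y (2 * k).
Proof.
case: k => [//|k] _.
have half_k : (2 * k).+2%:R / 2%:R = k.+1%:R :> R.
  by rewrite -add2n -mulnS natrM mulrAC divff ?mul1r ?pnatr_eq0.
rewrite /even_cfact_antidiff addn0 !addr0 [lfact _ 0]big_ord0 mulr1 mulnS add2n subn1 /=.
by rewrite half_k mulrAC [2%:R * y / 2%:R]mulrAC divff ?mul1r ?pnatr_eq0.
Qed.

Lemma even_cfact_antidiffS (R : numFieldType) k i (y : R) : (1 <= k)%N ->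
  even_cfact_antidiff k i.+1 y - even_cfact_antidiff k i.+1 (y - 1) =
  even_cfact_antidiff k i y.
Proof.
move=> k_gt0; rewrite /even_cfact_antidiff.
have [M eM] : exists M, (2 * k + i = M.+1)%N by exists (2 * k + i).-1; lia.
have L_neq0 : lfact (M.+1%:R : R) i != 0 by apply: lfact_nat_neq0; lia.
have M_eq : M%:R = 2%:R * k%:R + i%:R - 1 :> R by rewrite -natrM -natrD eM -natr1 addrK.
rewrite addnS eM !subn1 /=.
set z := y + k%:R + i%:R - 1.
have -> : y + k%:R + i.+1%:R - 1 = z + 1 by rewrite /z -natr1; ring.
have -> : y - 1 + k%:R + i.+1%:R - 1 = z by rewrite /z -natr1; ring.
rewrite lfactS addrK (lfactSr z) (lfactS M.+2%:R) -[M.+2%:R]natr1 addrK.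
set L := lfact M.+1%:R i.
rewrite /z -!natr1 M_eq; field.
by rewrite L_neq0 -M_eq !natr1 pnatr_eq0.
Qed.

Lemma even_cfact_antidiff_even (R : numFieldType) k r (y : R) :
  even_cfact_antidiff k (2 * r) y =
  (y + r%:R) * lfact (y + k%:R + (2 * r)%:R - 1) (2 * k + 2 * r - 1)
    / lfact (2 * k + 2 * r)%:R (2 * r).
Proof.
have D_neq0 : lfact ((2 * k + 2 * r)%:R : R) (2 * r) != 0.
  by apply: lfact_nat_neq0; rewrite leq_addl.
rewrite /even_cfact_antidiff [(2 * r)%:R]natrM -mulrDr.
set D := lfact _ (2 * r) in D_neq0 *.
by field; rewrite D_neq0.
Qed.

Theorem mainTheorem4 (R : realFieldType) (T : nat -> nat -> R)
  (hT : is_central_factorial_numbers T)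
  (m r n : nat) (x : R) (hm : (1 <= m)%N) (hn : (1 <= n)%N) :
  rsum (2 * r) (fun j => (x + j%:R) ^+ (2 * m)) n =
  \sum_(1 <= k < m.+1) T (2 * m)%N (2 * k)%N *
    ( (x + n%:R + r%:R) * lfact (x + n%:R + k%:R + (2 * r)%:R - 1) (2 * k + 2 * r - 1)
        / lfact (2 * k + 2 * r)%:R (2 * r)
      - \sum_(1 <= i < (2 * r).+1)
          'C(n + 2 * r - i - 1, 2 * r - i)%:R
          * ((2%:R * x + i%:R) * lfact (x + k%:R + i%:R - 1) (2 * k + i - 1))
          / (2%:R * lfact (2 * k + i)%:R i) ).
Proof.
pose A i (y : R) := \sum_(1 <= k < m.+1) T (2 * m)%N (2 * k)%N * even_cfact_antidiff k i y.
have A_antidiff i y : A i.+1 y - A i.+1 (y - 1) = A i y.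
  rewrite -sumrB; apply: eq_big_nat => k /andP [k_gt0 _].
  by rewrite -mulrBr even_cfact_antidiffS.
have A0 j : (x + j%:R) ^+ (2 * m) = A 0%N (x + j%:R).
  rewrite (even_expr_cfact _ hT hm); apply: eq_big_nat => k /andP [k_gt0 _].
  by rewrite even_cfact_antidiff0.
rewrite (eq_rsum _ A0) (rsum_antidiff A_antidiff) /A.
under [RHS]eq_bigr do rewrite mulrBr.
rewrite sumrB; congr (_ - _).
  by apply: eq_bigr => k _; rewrite even_cfact_antidiff_even.
under eq_bigr do rewrite mulr_sumr.
rewrite exchange_big; apply: eq_bigr => k _; rewrite mulr_sumr.
by apply: eq_bigr => i _; rewrite /even_cfact_antidiff mulrCA !mulrA.
Qed.
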